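(* Every primary quaternion of $H_{1,2,2}$ lies in $H_{1,2,2}^0$.
   Context: Let $\mathbf{i},\mathbf{j},\mathbf{k}$ be the standard quaternion units. $H_{1,2,2}$ is the subring of the quaternions equal to the $\mathbb{Z}$-module generated by $\mathbf{v}_1=1$, $\mathbf{v}_2=\mathbf{i}$, $\mathbf{v}_3=\tfrac12(1+\mathbf{i}+\sqrt2\,\mathbf{j})$, $\mathbf{v}_4=\tfrac12(1+\mathbf{i}+\sqrt2\,\mathbf{k})$. $H_{1,2,2}^0$ is the $\mathbb{Z}$-module generated by $1,\mathbf{i},\sqrt2\,\mathbf{j},\sqrt2\,\mathbf{k}$. Let $I = 2(1+\mathbf{i})H_{1,2,2}$ (this equals $H_{1,2,2}\,2(1+\mathbf{i})$ and the two-sided ideal generated by $2(1+\mathbf{i})$). An element $\mathbf{q}\in H_{1,2,2}$ is primary if $\mathbf{q}-1\in I$ or $\mathbf{q}-(1+2\mathbf{v}_3)\in I$. *)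

From HB Require Import structures.
From mathcomp Require Import all_boot all_order all_algebra.
Set Implicit Arguments. Unset Strict Implicit. Unset Printing Implicit Defensive.
Import Order.TTheory GRing.Theory Num.Theory.
Local Open Scope ring_scope.

(* q = q0 + q1 i + q2 j + q3 k *)
Record quat (R : Type) := Quat { q0 : R; q1 : R; q2 : R; q3 : R }.

Section Quat.
Variable R : rcfType.

Definition qadd (p q : quat R) : quat R :=
  Quat (q0 p + q0 q) (q1 p + q1 q) (q2 p + q2 q) (q3 p + q3 q).
Definition qopp (p : quat R) : quat R := Quat (- q0 p) (- q1 p) (- q2 p) (- q3 p).
Definition qsub (p q : quat R) : quat R := qadd p (qopp q).
Definition qmul (p q : quat R) : quat R :=
  Quat (q0 p * q0 q - q1 p * q1 q - q2 p * q2 q - q3 p * q3 q)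
       (q0 p * q1 q + q1 p * q0 q + q2 p * q3 q - q3 p * q2 q)
       (q0 p * q2 q - q1 p * q3 q + q2 p * q0 q + q3 p * q1 q)
       (q0 p * q3 q + q1 p * q2 q - q2 p * q1 q + q3 p * q0 q).
Definition qzscale (z : int) (p : quat R) : quat R :=
  Quat (z%:~R * q0 p) (z%:~R * q1 p) (z%:~R * q2 p) (z%:~R * q3 p).

Definition qone : quat R := Quat 1 0 0 0.
Definition qi : quat R := Quat 0 1 0 0.
Definition qj : quat R := Quat 0 0 1 0.
Definition qk : quat R := Quat 0 0 0 1.
Definition sqrt2 : R := Num.sqrt 2.

Definition v1 : quat R := qone.
Definition v2 : quat R := qi.
Definition v3 : quat R := Quat (1/2) (1/2) (sqrt2 / 2) 0.
Definition v4 : quat R := Quat (1/2) (1/2) 0 (sqrt2 / 2).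

Definition zcomb (a b c d : int) (w1 w2 w3 w4 : quat R) : quat R :=
  qadd (qadd (qzscale a w1) (qzscale b w2)) (qadd (qzscale c w3) (qzscale d w4)).

Definition inH122 (q : quat R) : Prop :=
  exists a b c d : int, q = zcomb a b c d v1 v2 v3 v4.

Definition inH122_0 (q : quat R) : Prop :=
  exists a b c d : int,
    q = zcomb a b c d qone qi (Quat 0 0 sqrt2 0) (Quat 0 0 0 sqrt2).

Definition two_one_i : quat R := qzscale 2 (qadd qone qi).

Definition inI (q : quat R) : Prop :=
  exists h, inH122 h /\ q = qmul two_one_i h.

Definition primary (q : quat R) : Prop :=
  inH122 q /\
  (inI (qsub q qone) \/ inI (qsub q (qadd qone (qzscale 2 v3)))).

End Quat.

(* In the basis v1..v4 the j- and k-coordinates of an element of H_{1,2,2} are c sqrt2/2 and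
   d sqrt2/2, and it lies in H^0_{1,2,2} exactly when c and d are even, i.e. when both
   coordinates are integer multiples of sqrt2.  Multiplication by 2(1+i) sends h to an element
   with j- and k-coordinates 2(h_j - h_k) and 2(h_j + h_k), which are integer multiples of sqrt2;
   so does 1 + 2 v3 = 2 + i + sqrt2 j, and hence so does every primary quaternion. *)
From mathcomp Require Import all_boot all_order all_algebra.
From mathcomp Require Import ring lra.
Import Order.TTheory GRing.Theory Num.Theory.
Local Open Scope ring_scope.

Section PrimaryQuaternions.
Variable R : rcfType.

Definition sqrt2_multiple (x : R) : Prop := exists e : int, x = e%:~R * sqrt2 R.

Lemma sqrt2_neq0 : sqrt2 R != 0.
Proof. by rewrite /sqrt2 gt_eqF // sqrtr_gt0 ltr0n. Qed.

Lemma sqrt2_multipleD (x y : R) :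
  sqrt2_multiple x -> sqrt2_multiple y -> sqrt2_multiple (x + y).
Proof. by move=> [e ->] [f ->]; exists (e + f); rewrite rmorphD mulrDl. Qed.

Lemma half_sqrt2_multiple (c : int) :
  sqrt2_multiple (c%:~R * (sqrt2 R / 2)) -> exists m : int, c = 2 * m.
Proof.
move=> [e He]; exists e.
have : (c%:~R - (2 * e)%:~R) * sqrt2 R = 0.
  transitivity (2 * (c%:~R * (sqrt2 R / 2)) - 2 * (e%:~R * sqrt2 R)).
    by rewrite rmorphM /=; field.
  by rewrite He subrr.
move/eqP; rewrite mulf_eq0 (negbTE sqrt2_neq0) orbF subr_eq0 => /eqP.
exact: intr_inj.
Qed.

Lemma zcomb_even_inH122_0 (a b m n : int) :
  inH122_0 (zcomb a b (2 * m) (2 * n) (v1 R) (v2 R) (v3 R) (v4 R)).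
Proof.
exists (a + m + n), (b + m + n), m, n.
rewrite /zcomb /qzscale /qadd /v1 /v2 /v3 /v4 /qone /qi /=.
by congr Quat; rewrite ?rmorphD ?rmorphM /=; field.
Qed.

Lemma zcomb_v_jk (a b c d : int) :
  let q := zcomb a b c d (v1 R) (v2 R) (v3 R) (v4 R) in
  q2 q = c%:~R * (sqrt2 R / 2) /\ q3 q = d%:~R * (sqrt2 R / 2).
Proof. by rewrite /zcomb /qzscale /qadd /v1 /v2 /v3 /v4 /qone /qi /=; split; ring. Qed.

Lemma inH122_sqrt2_multiple_inH122_0 (q : quat R) :
  inH122 q -> sqrt2_multiple (q2 q) -> sqrt2_multiple (q3 q) -> inH122_0 q.
Proof.
move=> [a [b [c [d ->]]]]; have [-> ->] := zcomb_v_jk a b c d.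
by move=> /half_sqrt2_multiple[m ->] /half_sqrt2_multiple[n ->]; apply: zcomb_even_inH122_0.
Qed.

Lemma inI_sqrt2_multiple (q : quat R) :
  inI q -> sqrt2_multiple (q2 q) /\ sqrt2_multiple (q3 q).
Proof.
move=> [_ [[a [b [c [d ->]]]] ->]].
split; [exists (c - d) | exists (c + d)];
  rewrite /qmul /two_one_i /zcomb /qzscale /qadd /v1 /v2 /v3 /v4 /qone /qi /=;
  by rewrite ?(rmorphD, rmorphB) /=; field.
Qed.

Lemma inI_sub_sqrt2_multiple (q p : quat R) :
  inI (qsub q p) -> sqrt2_multiple (q2 p) -> sqrt2_multiple (q3 p) ->
  sqrt2_multiple (q2 q) /\ sqrt2_multiple (q3 q).
Proof.
move=> /inI_sqrt2_multiple[Ej Ek] Pj Pk.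
have -> : q2 q = q2 (qsub q p) + q2 p by rewrite /= subrK.
have -> : q3 q = q3 (qsub q p) + q3 p by rewrite /= subrK.
by split; apply: sqrt2_multipleD.
Qed.

End PrimaryQuaternions.

Theorem lemma13 (R : rcfType) (q : quat R) : primary q -> inH122_0 q.
Proof.
move=> [Hq Hprim].
have zero_multiple : sqrt2_multiple R 0 by exists 0; rewrite mul0r.
have [Pj Pk] : sqrt2_multiple R (q2 q) /\ sqrt2_multiple R (q3 q).
  case: Hprim => /inI_sub_sqrt2_multiple; apply=> //=.
  - by rewrite /v3 /=; exists 1; field.
  - by rewrite /v3 /= mulr0 addr0.
exact: inH122_sqrt2_multiple_inH122_0.
Qed.
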